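(* Let $2\le k_1<\dots<k_m\le n$ ($m\ge1$), $1\le i_{k_j}\le k_j-1$, with $M:=\sum_{j=1}^m i_{k_j}\le k_1$; let $\pi'=t_{k_1}^{i_{k_1}}\cdots t_{k_m}^{i_{k_m}}\in S_n$ and $\pi^\circ$ the same word in $D_n$. Let $L_1,\dots,L_u$ be pairwise distinct integers in $\{1,\dots,n-1\}$ and $\pi=w_{L_1}\cdot w_{L_2}\cdots w_{L_u}\cdot\pi^\circ$. For each $j$ define $$\varrho_{L_j}=\begin{cases} L_j & \text{if } L_j<M \text{ or } L_j\ge k_m,\\ L_j-M & \text{if } M\le L_j<k_1,\\ L_j-\sum_{x=q}^m i_{k_x} & \text{if } k_{q-1}\le L_j<k_q \text{ for some } 2\le q\le m.\end{cases}$$ Then $\ell(\pi)=\ell(\pi')+2\sum_{j=1}^u\varrho_{L_j}$.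
   Context: $D_n$ ($n\ge2$) is the Coxeter group with generators $s_{1'},s_1,\dots,s_{n-1}$ and relations $s^2=1$, $(s_i s_{i+1})^3=1$, $(s_is_j)^2=1$ for $|i-j|\ge 2$, $(s_{1'}s_2)^3=1$, $(s_{1'}s_i)^2=1$ for $i\ne 2$; $S_n$ has Coxeter generators $s_i=(i,i+1)$. In both groups $t_k=s_1\cdots s_{k-1}$; in $D_n$, $w_L=s_L s_{L-1}\cdots s_2 s_1 s_{1'} s_2\cdots s_L$. $\ell$ is Coxeter length in $D_n$ (generators $s_{1'},s_1,\dots,s_{n-1}$), resp. in $S_n$ for $\ell(\pi')$. (The hypothesis $M\le k_1$ says $\pi'$ is a standard OGS elementary element with major index $M$.) *)

From mathcomp Require Import all_boot all_order all_algebra.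
Set Implicit Arguments. Unset Strict Implicit. Unset Printing Implicit Defensive.
Import GRing.Theory Num.Theory.

(* Elements act on the integers (signed letters).                          *)
(* D_n generator letters are naturals: 0 stands for s_{1'}, i >= 1 for s_i. *)
(* S_n generator letters: i >= 1 stands for s_i = (i, i+1).                 *)

Local Open Scope ring_scope.

Definition swap_signed (i : nat) (x : int) : int :=
  if x == i%:Z then (i.+1)%:Z
  else if x == (i.+1)%:Z then i%:Z
  else if x == - i%:Z then - (i.+1)%:Z
  else if x == - (i.+1)%:Z then - i%:Z
  else x.

Definition actD (g : nat) (x : int) : int :=
  if g == 0%N then
    (if x == 1 then -2 else if x == 2 then -1
     else if x == -1 then 2 else if x == -2 then 1 else x)
  else swap_signed g x.

Definition actS (g : nat) (x : int) : int :=
  if x == g%:Z then (g.+1)%:Z else if x == (g.+1)%:Z then g%:Z else x.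

Local Close Scope ring_scope.

Definition evalw (act : nat -> int -> int) (w : seq nat) (x : int) : int :=
  foldr act x w.

(* Coxeter length of the group element represented by the word w over the
   finite generator type G (letters decoded by toidx): the minimal length of
   a word over G representing the same element, i.e. with the same action
   on 1..n (which determines the (signed) permutation). *)
Section CoxLen.
Variables (G : finType) (toidx : G -> nat) (act : nat -> int -> int) (n : nat).

Definition same_elt (w1 w2 : seq G) : bool :=
  [forall i : 'I_n, evalw act (map toidx w1) (i.+1)%:Z ==
                    evalw act (map toidx w2) (i.+1)%:Z].

Lemma coxlen_ex (w : seq G) :
  exists k, [exists t : k.-tuple G, same_elt t w].
Proof.
exists (size w); apply/existsP; exists (in_tuple w).
by apply/forallP => i.
Qed.

Definition coxlen (w : seq G) : nat := ex_minn (coxlen_ex w).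
End CoxLen.

(* generators of D_n : 'I_n, value 0 = s_{1'}, value i = s_i (1 <= i <= n-1) *)
Definition toD (n : nat) (w : seq nat) : seq 'I_n := pmap insub w.
Definition lenD (n : nat) (w : seq nat) : nat :=
  coxlen (fun g : 'I_n => val g) actD n (toD n w).

(* generators of S_n : 'I_n.-1, value j = s_{j+1} (1 <= j+1 <= n-1) *)
Definition toS (n : nat) (w : seq nat) : seq 'I_n.-1 :=
  pmap (fun i => insub i.-1) w.
Definition lenS (n : nat) (w : seq nat) : nat :=
  coxlen (fun g : 'I_n.-1 => (val g).+1) actS n (toS n w).

Definition t_word (k : nat) : seq nat := iota 1 k.-1.
Definition tpow_word (k e : nat) : seq nat := flatten (nseq e (t_word k)).
Definition ogs_word (m : nat) (k i : nat -> nat) : seq nat :=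
  flatten [seq tpow_word (k j) (i j) | j <- iota 1 m].
Definition wL_word (L : nat) : seq nat := rev (iota 1 L) ++ 0 :: iota 2 L.-1.

From mathcomp Require Import all_boot all_order all_algebra all_fingroup zify.
Set Implicit Arguments. Unset Strict Implicit. Unset Printing Implicit Defensive.
Import Order.TTheory GRing.Theory Num.Theory.

(* Both lengths are inversion statistics of the images of [1..n]: for a signed
   permutation [v] of type D, l(v) = #{a < b | v b < v a} + #{a < b | v a + v b < 0},
   and l_S is the ordinary inversion number.  Each holds because a generator changes
   the statistic by at most one, the statistic vanishes only at the identity, and a
   non-identity element always has a generator lowering it.
   The word of pi' acts on positive values as pi' itself, and w_L only negates the
   values 1 and L + 1; so pi maps a to pi'(a) with a sign, negative on the values
   L_j + 1 (and possibly on 1).  Comparing the two statistics pair by pair, a negated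
   value y at position b contributes two extra D-inversions for every position before
   b holding a value smaller than y.  For the OGS element with M <= k_1 the values
   1..M occur in increasing order, while a value y > M sits at position y - T(y), with
   T(y) the sum of the exponents i_(k_j) over k_j >= y; hence the count for
   y = L + 1 is L when L < M and L - T(L + 1) otherwise, which is rho_L. *)

Ltac case_ifs := repeat match goal with |- context[if ?b then _ else _] =>
  lazymatch b with context[if _ then _ else _] => fail | _ => case: (boolP b) => ? /= end end.

Lemma evalw_cat act w1 w2 x : evalw act (w1 ++ w2) x = evalw act w1 (evalw act w2 x).
Proof. by rewrite /evalw foldr_cat. Qed.

Lemma evalw_rcons act w g x : evalw act (rcons w g) x = evalw act w (act g x).
Proof. by rewrite -cats1 evalw_cat. Qed.

Definition agree (n : nat) (v v' : nat -> int) : Prop := forall a, (a < n)%N -> v a = v' a.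

Definition id_vec : nat -> int := fun a => Posz a.+1.

(* Positions are 0-based: entry [a] is the image of [a.+1]. *)
Definition images (G : Type) (toidx : G -> nat) (act : nat -> int -> int)
  (w : seq G) : nat -> int := fun a => evalw act (map toidx w) (Posz a.+1).

Section CoxlenStatistic.
Variables (G : finType) (toidx : G -> nat) (act : nat -> int -> int) (n : nat).
Variables (stat : (nat -> int) -> nat) (admissible : (nat -> int) -> Prop)
  (op : G -> (nat -> int) -> nat -> int).
Local Notation img := (images toidx act).

Hypothesis img_rcons : forall w g, agree n (img (rcons w g)) (op g (img w)).
Hypothesis op_agree : forall g v v', agree n v v' -> agree n (op g v) (op g v').
Hypothesis op_invol : forall g v, agree n (op g (op g v)) v.
Hypothesis stat_agree : forall v v', agree n v v' -> stat v = stat v'.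
Hypothesis admissible_img : forall w, admissible (img w).
Hypothesis stat_op_le : forall g v, (stat (op g v) <= (stat v).+1)%N.
Hypothesis stat_eq0 : forall v, admissible v -> stat v = 0%N -> agree n v id_vec.
Hypothesis stat_descent : forall v, (0 < stat v)%N -> exists g, (stat (op g v)).+1 = stat v.
Hypothesis stat_id : stat id_vec = 0%N.

Lemma stat_img_le_size t : (stat (img t) <= size t)%N.
Proof.
elim/last_ind: t => [|t g IH]; first by rewrite (_ : img [::] = id_vec) // stat_id.
rewrite (stat_agree (img_rcons t g)) size_rcons.
exact: leq_trans (stat_op_le g _) _.
Qed.

Lemma img_word_of_size_stat w :
  exists2 t, size t = stat (img w) & agree n (img t) (img w).
Proof.
have [N Hw] : exists N, stat (img w) = N by exists (stat (img w)).
rewrite Hw; elim: N w Hw => [|N IH] w Hw.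
  by exists [::] => // a Ha; rewrite (stat_eq0 (admissible_img w) Hw Ha).
have [g Hg] := stat_descent (ltac:(by rewrite Hw) : (0 < stat (img w))%N).
have Hwg : stat (img (rcons w g)) = N.
  by rewrite (stat_agree (img_rcons w g)); apply/eqP; rewrite -eqSS Hg Hw.
have [t Ht1 Ht2] := IH _ Hwg.
exists (rcons t g); first by rewrite size_rcons Ht1.
move=> a Ha; rewrite img_rcons // (op_agree g Ht2 Ha).
by rewrite (op_agree g (img_rcons w g) Ha) op_invol.
Qed.

Lemma coxlen_stat w : coxlen toidx act n w = stat (img w).
Proof.
rewrite /coxlen; case: ex_minnP => N /existsP [t' /forallP Ht'] Hmin.
apply/eqP; rewrite eqn_leq; apply/andP; split.
  have [t Ht1 Ht2] := img_word_of_size_stat w.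
  apply: Hmin; apply/existsP.
  have Hs : size t == stat (img w) by rewrite Ht1.
  exists (Tuple Hs); apply/forallP => i /=.
  by have := Ht2 i (ltn_ord i); rewrite /images => ->.
have -> : stat (img w) = stat (img t').
  by apply: stat_agree => a Ha; have := Ht' (Ordinal Ha); rewrite /images => /eqP.
by apply: leq_trans (stat_img_le_size t') _; rewrite size_tuple.
Qed.

End CoxlenStatistic.

Definition pair_stat (phi : int -> int -> nat) (n : nat) (v : nat -> int) : nat :=
  \sum_(a < n) \sum_(b < n) ((a < b)%N * phi (v a) (v b)).

Definition dinv (x y : int) : nat := ((y < x)%R + (x + y < 0)%R)%N.
Definition sinv (x y : int) : nat := (y < x)%R.

Definition swapn (c a : nat) : nat := if a == c then c.+1 else if a == c.+1 then c else a.
Definition swap_at (c : nat) (v : nat -> int) : nat -> int := fun a => v (swapn c a).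
Definition negate0 (v : nat -> int) : nat -> int :=
  fun a => if a == 0%N then (- v 0%N)%R else v a.
Definition swap_negate01 (v : nat -> int) : nat -> int :=
  fun a => if a == 0%N then (- v 1%N)%R else if a == 1%N then (- v 0%N)%R else v a.

Lemma swapnK c : involutive (swapn c).
Proof.
move=> a; rewrite /swapn; case: (eqVneq a c) => [->|h1].
  by rewrite (gtn_eqF (ltnSn c)) eqxx.
case: (eqVneq a c.+1) => [->|h2]; first by rewrite eqxx.
by rewrite (negbTE h1) (negbTE h2).
Qed.

Lemma swapn_lt n c a : (c.+1 < n)%N -> (a < n)%N -> (swapn c a < n)%N.
Proof. by move=> *; rewrite /swapn; case_ifs; lia. Qed.

Lemma swapnSS c a : swapn c.+1 a.+1 = (swapn c a).+1.
Proof. by rewrite /swapn; case_ifs; lia. Qed.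

Lemma swapn_tperm n c (hc : (c.+1 < n)%N) (a : 'I_n) :
  val (tperm (Ordinal (ltnW hc)) (Ordinal hc) a) = swapn c a.
Proof.
rewrite /swapn; case: tpermP => [->|->|h1 h2] /=; rewrite ?eqxx //.
  by rewrite (gtn_eqF (ltnSn c)).
case: (a =P c :> nat) => [e|_]; first by exfalso; apply: h1; apply: val_inj.
by case: (a =P c.+1 :> nat) => [e|_] //; exfalso; apply: h2; apply: val_inj.
Qed.

Lemma sum_swapn n c (f : nat -> nat) : (c.+1 < n)%N ->
  (\sum_(a < n) f (swapn c a) = \sum_(a < n) f a)%N.
Proof.
move=> hc; set t := tperm (Ordinal (ltnW hc)) (Ordinal hc).
rewrite (reindex_inj (@perm_inj _ t)); apply: eq_bigr => a _.
by rewrite swapn_tperm swapnK.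
Qed.

Lemma pair_stat_agree phi n v v' : agree n v v' -> pair_stat phi n v = pair_stat phi n v'.
Proof. by move=> H; apply: eq_bigr => a _; apply: eq_bigr => b _; rewrite !H. Qed.

Lemma double_sum_eq_off_pair n (F H : 'I_n -> 'I_n -> nat) (x y : 'I_n) : x != y ->
  (forall a b, ~ (a = x /\ b = y) -> ~ (a = y /\ b = x) -> F a b = H a b) ->
  (\sum_(a < n) \sum_(b < n) F a b + H x y + H y x =
   \sum_(a < n) \sum_(b < n) H a b + F x y + F y x)%N.
Proof.
move=> nxy FH; rewrite !pair_bigA /=.
have nyx : (y, x) != (x, y) by apply: contraNneq nxy => -[->].
have split2 (f : 'I_n * 'I_n -> nat) : (\sum_p f p =
    f (x, y) + f (y, x) + \sum_(p | (p != (x, y)) && (p != (y, x))) f p)%N.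
  rewrite (bigD1 (x, y)) //= (bigD1 (y, x)) /=; last by rewrite nyx.
  by rewrite addnA; congr (_ + _)%N; apply: eq_bigl => p; rewrite andbC.
rewrite (split2 (fun p => F p.1 p.2)) (split2 (fun p => H p.1 p.2)) /=.
rewrite (eq_bigr (fun p => H p.1 p.2)); last first.
  move=> [a b] /andP [h1 h2] /=; apply: FH => -[e1 e2]; subst.
    by rewrite eqxx in h1.
  by rewrite eqxx in h2.
set S := (\sum_(p | _) H p.1 p.2)%N; lia.
Qed.

(* Swapping two adjacent entries only changes the status of that pair. *)
Lemma pair_stat_swap_at phi n c v : (c.+1 < n)%N ->
  (pair_stat phi n (swap_at c v) + phi (v c) (v c.+1) =
   pair_stat phi n v + phi (v c.+1) (v c))%N.
Proof.
move=> hc; set x := Ordinal (ltnW hc); set y := Ordinal hc; set t := tperm x y.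
have ht a : val (t a) = swapn c a by apply: swapn_tperm.
have -> : pair_stat phi n (swap_at c v) =
    (\sum_(a < n) \sum_(b < n) ((t a < t b)%N * phi (v a) (v b)))%N.
  rewrite /pair_stat (reindex_inj (@perm_inj _ t)); apply: eq_bigr => a _.
  rewrite (reindex_inj (@perm_inj _ t)); apply: eq_bigr => b _.
  by rewrite /swap_at -!ht !tpermK.
have nxy : x != y by rewrite -val_eqE /= neq_ltn ltnSn.
have := @double_sum_eq_off_pair n (fun a b => ((t a < t b)%N * phi (v a) (v b))%N)
   (fun a b => ((a < b)%N * phi (v a) (v b))%N) x y nxy.
rewrite /t tpermL tpermR /= ltnSn ltnNge leqnSn /= !mul1n !mul0n !addn0.
move=> ->; first by [].
move=> a b h1 h2; congr (_ * _)%N.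
have h1' : ~ ((a:nat) = c /\ (b:nat) = c.+1).
  by case=> e1 e2; apply: h1; split; apply: val_inj.
have h2' : ~ ((a:nat) = c.+1 /\ (b:nat) = c).
  by case=> e1 e2; apply: h2; split; apply: val_inj.
by rewrite -/t !ht /swapn; case_ifs; lia.
Qed.

Lemma dinv_oppl x y : dinv (- x)%R y = dinv x y.
Proof. rewrite /dinv; lia. Qed.

Lemma pair_stat_negate0 n v : pair_stat dinv n (negate0 v) = pair_stat dinv n v.
Proof.
apply: eq_bigr => a _; apply: eq_bigr => b _; rewrite /negate0.
case: (eqVneq (a : nat) 0%N) => ea; case: (eqVneq (b : nat) 0%N) => eb.
- by rewrite ea eb.
- by rewrite dinv_oppl ea.
- by rewrite eb ltn0 !mul0n.
- by [].
Qed.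

(* [swap_negate01] is [s_1 e s_1 e s_1], where [e] negates the first entry. *)
Lemma pair_stat_swap_negate01 n v : (1 < n)%N ->
  (pair_stat dinv n (swap_negate01 v) + (v 0%N + v 1%N < 0)%R =
   pair_stat dinv n v + (0 < v 0%N + v 1%N)%R)%N.
Proof.
move=> hn.
have -> : pair_stat dinv n (swap_negate01 v) =
    pair_stat dinv n (swap_at 0 (negate0 (swap_at 0 (negate0 (swap_at 0 v))))).
  by apply: pair_stat_agree => -[|[|a]].
have h1 := pair_stat_swap_at dinv v hn.
have h2 := pair_stat_swap_at dinv (negate0 (swap_at 0 v)) hn.
have h3 := pair_stat_swap_at dinv (negate0 (swap_at 0 (negate0 (swap_at 0 v)))) hn.
rewrite !pair_stat_negate0 in h2 h3.
move: h1 h2 h3; rewrite /negate0 /swap_at /swapn /= /dinv; lia.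
Qed.

Lemma actD_opp g x : actD g (- x)%R = (- actD g x)%R.
Proof. by rewrite /actD /swap_signed; case: g => [|g] /=; case_ifs; lia. Qed.

Lemma evalwD_opp w x : evalw actD w (- x)%R = (- evalw actD w x)%R.
Proof. by elim: w => //= g w ->; rewrite actD_opp. Qed.

Lemma actD_pos g y : (0 < g)%N -> actD g (Posz y) = Posz (swapn g y).
Proof.
by case: g => [//|g] _; rewrite /actD /swap_signed /swapn /=; case_ifs; lia.
Qed.

Lemma actS_pos g y : actS g (Posz y) = Posz (swapn g y).
Proof. by rewrite /actS /swapn; case_ifs; lia. Qed.

Lemma actD0 a : actD 0 (Posz a.+1) =
  if a == 0%N then (-2)%R else if a == 1%N then (-1)%R else Posz a.+1.
Proof. by rewrite /actD /=; case_ifs; lia. Qed.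

Lemma homo_le_adjacent n (v : nat -> int) :
  (forall c, (c.+1 < n)%N -> (v c <= v c.+1)%R) ->
  forall a b, (a <= b)%N -> (b < n)%N -> (v a <= v b)%R.
Proof.
move=> H a b hab hb.
apply: (@homo_leq_in _ [pred x | x < n]%N v (fun x y => x <= y)%R) => //=.
- by move=> y x z /le_trans; apply.
- by move=> i j _ hj c /andP [_ hc]; rewrite inE (ltn_trans hc).
- by move=> c _; rewrite inE => /H.
- by rewrite inE (leq_ltn_trans hab).
Qed.

Lemma increasing_bounded_id n (v : nat -> int) :
  (forall a b, (a < b)%N -> (b < n)%N -> (v a < v b)%R) ->
  (forall a, (a < n)%N -> (0 < v a)%R /\ (v a <= n%:Z)%R) ->
  agree n v id_vec.
Proof.
move=> Hs Hb.
have low a : (a < n)%N -> (Posz a.+1 <= v a)%R.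
  elim: a => [|a IH] ha; first by have [h _] := Hb 0%N ha; lia.
  by have := IH (ltnW ha); have := Hs _ _ (ltnSn a) ha; lia.
have up d : (d < n)%N -> (v (n.-1 - d)%N <= Posz (n - d))%R.
  elim: d => [|d IH] hd; first by have [_ h] := Hb n.-1 ltac:(lia); rewrite !subn0.
  have := IH (ltnW hd); have := Hs (n.-1 - d.+1)%N (n.-1 - d)%N ltac:(lia) ltac:(lia).
  have -> : (n - d = (n - d.+1).+1)%N by lia.
  lia.
move=> a ha; have := low a ha; have := up (n.-1 - a)%N ltac:(lia).
rewrite /id_vec; have -> : (n.-1 - (n.-1 - a) = a)%N by lia.
have -> : (n - (n.-1 - a) = a.+1)%N by lia.
lia.
Qed.

Lemma pair_stat_eq0 phi n v : pair_stat phi n v = 0%N ->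
  forall a b, (a < b)%N -> (b < n)%N -> phi (v a) (v b) = 0%N.
Proof.
move=> /eqP; rewrite /pair_stat sum_nat_eq0 => /forallP H a b hab hb.
have := H (Ordinal (ltn_trans hab hb)).
rewrite sum_nat_eq0 => /forallP /(_ (Ordinal hb)).
by rewrite /= hab mul1n => /eqP.
Qed.

Lemma pair_stat_gt0 phi n v : (0 < pair_stat phi n v)%N ->
  exists a b, [/\ (a < b)%N, (b < n)%N & (0 < phi (v a) (v b))%N].
Proof.
case: (boolP [exists a : 'I_n, exists b : 'I_n, (a < b)%N && (0 < phi (v a) (v b))%N]).
  by move/existsP => [a /existsP [b /andP [h1 h2]]] _; exists a, b.
rewrite negb_exists => /forallP Hn; rewrite /pair_stat big1 // => a _; apply: big1 => b _.
have := Hn a; rewrite negb_exists => /forallP /(_ b).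
by case/nandP => [/negbTE -> // | ]; rewrite -leqNgt leqn0 => /eqP ->; rewrite muln0.
Qed.

Lemma pair_stat_id phi n : (forall x y : nat, (x < y)%N -> phi (Posz x) (Posz y) = 0%N) ->
  pair_stat phi n id_vec = 0%N.
Proof.
move=> phi0; rewrite /pair_stat big1 // => a _; rewrite big1 // => b _.
by case: (ltnP a b) => h; rewrite ?mul0n // phi0 ?muln0.
Qed.

Section TypeD.
Variable n : nat.
Hypothesis n_gt1 : (1 < n)%N.

Definition even_signed_perm (v : nat -> int) : Prop :=
  [/\ forall a, (a < n)%N -> (0 < absz (v a) <= n)%N,
      forall a b, (a < n)%N -> (b < n)%N -> absz (v a) = absz (v b) -> a = b
    & ~~ odd (\sum_(a < n) (v a < 0)%R)].

Definition opD (g : 'I_n) (v : nat -> int) : nat -> int :=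
  if val g == 0%N then swap_negate01 v else swap_at (val g).-1 v.

Local Notation imgD := (images (fun g : 'I_n => val g) actD).

Lemma even_signed_perm_agree v v' : agree n v v' -> even_signed_perm v -> even_signed_perm v'.
Proof.
move=> H [h1 h2 h3]; split.
- by move=> a ha; rewrite -H //; apply: h1.
- by move=> a b ha hb; rewrite -!H //; apply: h2.
- by rewrite (eq_bigr (fun a : 'I_n => (v a < 0)%R : nat)) // => a _; rewrite H.
Qed.

Lemma even_signed_perm_swap_at c v : (c.+1 < n)%N ->
  even_signed_perm v -> even_signed_perm (swap_at c v).
Proof.
move=> hc [h1 h2 h3]; split.
- by move=> a ha; apply: h1; apply: swapn_lt.
- move=> a b ha hb /h2 e; rewrite -(swapnK c a) -(swapnK c b).
  by rewrite e // swapn_lt.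
- by rewrite /swap_at (sum_swapn (fun a => (v a < 0)%R : nat)).
Qed.

Lemma even_signed_perm_swap_negate01 v :
  even_signed_perm v -> even_signed_perm (swap_negate01 v).
Proof.
have [n' en] : exists n', n = n'.+2 by exists n.-2; lia.
rewrite /even_signed_perm en => -[h1 h2 h3]; split.
- move=> a ha; rewrite /swap_negate01; case: ifP => [/eqP _|_].
    by rewrite abszN; apply: h1.
  case: ifP => [/eqP _|_]; last exact: h1.
  by rewrite abszN; apply: h1.
- have ea a : absz (swap_negate01 v a) = absz (v (swapn 0 a)).
    by case: a => [|[|a]] //=; rewrite abszN.
  move=> a b ha hb; rewrite !ea => /h2 e; rewrite -(swapnK 0 a) -(swapnK 0 b).
  by rewrite e // swapn_lt.
- move: h3; rewrite !big_ord_recl /= /swap_negate01 /bump /= !add1n.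
  have := h1 0%N isT; have := h1 1%N isT => v1 v0.
  set R := (\sum_(i < n') _)%N; set A := (_ + (_ + R))%N; set B := (_ + (_ + R))%N.
  have : ~~ odd (A + B) by rewrite (_ : A + B = (R + 1).*2)%N ?odd_double // /A /B; lia.
  by rewrite oddD; case: (odd A); case: (odd B).
Qed.

Lemma imgD_rcons w g : agree n (imgD (rcons w g)) (opD g (imgD w)).
Proof.
move=> a ha; rewrite /images map_rcons evalw_rcons /opD /swap_negate01.
case: (eqVneq (val g) 0%N) => [->|hg].
  rewrite actD0; case: ifP => _; first by rewrite -evalwD_opp.
  by case: ifP => _ //; rewrite -evalwD_opp.
by rewrite actD_pos ?lt0n // /swap_at -swapnSS prednK ?lt0n.
Qed.

Lemma opD_agree g v v' : agree n v v' -> agree n (opD g v) (opD g v').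
Proof.
move=> H a ha; rewrite /opD; case: ifP => hg.
  by rewrite /swap_negate01; case: ifP => _; [|case: ifP => _]; rewrite H //; lia.
rewrite /swap_at H //; apply: swapn_lt => //.
by case: g hg => [[|g]] //= hg.
Qed.

Lemma opD_invol g v : agree n (opD g (opD g v)) v.
Proof.
move=> a _; rewrite /opD; case: (val g == 0%N).
  by rewrite /swap_negate01; case: a => [|[|a]] //=; rewrite ?opprK.
by rewrite /swap_at swapnK.
Qed.

Lemma even_signed_perm_img w : even_signed_perm (imgD w).
Proof.
elim/last_ind: w => [|w g IH].
  split; [by move=> a ha /=; rewrite /images /=; lia | by move=> a b _ _ /= [] | by rewrite big1].
apply: even_signed_perm_agree (fun a ha => esym (imgD_rcons w g ha)) _.
rewrite /opD; case: ifP => hg; first exact: even_signed_perm_swap_negate01.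
by apply: even_signed_perm_swap_at => //; case: g hg => [[|g]] //= hg.
Qed.

Lemma pair_stat_opD_le g v : (pair_stat dinv n (opD g v) <= (pair_stat dinv n v).+1)%N.
Proof.
rewrite /opD; case: ifP => hg; first by have := pair_stat_swap_negate01 v n_gt1; lia.
have hc : ((val g).-1.+1 < n)%N by case: g hg => [[|g]] //= hg.
by have := pair_stat_swap_at dinv v hc; rewrite /dinv; lia.
Qed.

Lemma pair_stat_dinv_eq0 v : even_signed_perm v -> pair_stat dinv n v = 0%N -> agree n v id_vec.
Proof.
move=> [h1 h2 h3] /pair_stat_eq0 Z.
have Hs a b : (a < b)%N -> (b < n)%N -> (v a < v b)%R.
  move=> hab hb; have := Z a b hab hb; rewrite /dinv.
  have : v a <> v b.
    by move=> e; have := h2 a b (ltn_trans hab hb) hb; rewrite e => /(_ erefl); lia.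
  lia.
have Hp a : (0 < a)%N -> (a < n)%N -> (0 <= v a)%R.
  by move=> ha0 ha; have := Z 0%N a ha0 ha; have := Hs 0%N a ha0 ha; rewrite /dinv; lia.
have H0p : (0 <= v 0%N)%R.
  case: n n_gt1 h3 Hp => [|[|n']] // _ h3 Hp; move: h3.
  rewrite big_ord_recl /= big1 ?addn0; first by case: ltP => //; lia.
  by move=> a _; rewrite /bump /= add1n; have := Hp a.+1 isT (ltn_ord a); lia.
apply: increasing_bounded_id => // a ha; have := h1 a ha.
have : (0 <= v a)%R by case: a ha => [|a] ha //; apply: Hp.
lia.
Qed.

Lemma pair_stat_dinv_descent v :
  (0 < pair_stat dinv n v)%N -> exists g, (pair_stat dinv n (opD g v)).+1 = pair_stat dinv n v.
Proof.
move=> Hpos.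
case: (boolP [exists c : 'I_n, (c.+1 < n)%N && (v c.+1 < v c)%R]).
  move/existsP => [c /andP [hc hlt]]; exists (Ordinal hc); rewrite /opD /=.
  by have := pair_stat_swap_at dinv v hc; rewrite /dinv; lia.
rewrite negb_exists => /forallP Hn.
have Hadj c : (c.+1 < n)%N -> (v c <= v c.+1)%R.
  by move=> hc; have := Hn (Ordinal (ltn_trans (ltnSn c) hc)); rewrite /= hc /=; lia.
have [a [b [hab hb hp]]] := pair_stat_gt0 Hpos.
have := homo_le_adjacent Hadj (ltnW hab) hb.
have := homo_le_adjacent Hadj (leq0n a) (ltn_trans hab hb).
have := homo_le_adjacent Hadj (leq_ltn_trans (leq0n a) hab : (1 <= b)%N) hb.
move=> h1 h2 h3; rewrite /dinv in hp.
exists (Ordinal (ltn_trans (ltn0Sn 0) n_gt1)); rewrite /opD /=.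
by have := pair_stat_swap_negate01 v n_gt1; lia.
Qed.

Lemma coxlenD w : coxlen (fun g : 'I_n => val g) actD n w = pair_stat dinv n (imgD w).
Proof.
apply: (coxlen_stat (admissible := even_signed_perm) (op := opD)).
- exact: imgD_rcons.
- exact: opD_agree.
- exact: opD_invol.
- exact: pair_stat_agree.
- exact: even_signed_perm_img.
- exact: pair_stat_opD_le.
- exact: pair_stat_dinv_eq0.
- exact: pair_stat_dinv_descent.
- by apply: pair_stat_id => x y; rewrite /dinv; lia.
Qed.

End TypeD.

Section TypeS.
Variable n : nat.

Definition perm_vec (v : nat -> int) : Prop :=
  (forall a, (a < n)%N -> (0 < v a)%R /\ (v a <= n%:Z)%R) /\
  (forall a b, (a < n)%N -> (b < n)%N -> v a = v b -> a = b).

Definition opS (g : 'I_n.-1) (v : nat -> int) : nat -> int := swap_at (val g) v.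

Local Notation imgS := (images (fun g : 'I_n.-1 => (val g).+1) actS).

Lemma ord_pred_lt (g : 'I_n.-1) : ((val g).+1 < n)%N.
Proof. by case: g => g /=; case: n. Qed.

Lemma imgS_rcons w g : agree n (imgS (rcons w g)) (opS g (imgS w)).
Proof. by move=> a ha; rewrite /images map_rcons evalw_rcons actS_pos swapnSS. Qed.

Lemma opS_agree g v v' : agree n v v' -> agree n (opS g v) (opS g v').
Proof. by move=> H a ha; rewrite /opS /swap_at H // swapn_lt // ord_pred_lt. Qed.

Lemma opS_invol g v : agree n (opS g (opS g v)) v.
Proof. by move=> a _; rewrite /opS /swap_at swapnK. Qed.

Lemma perm_vec_img w : perm_vec (imgS w).
Proof.
elim/last_ind: w => [|w g [h1 h2]].
  by split; [move=> a ha; rewrite /images /=; lia | move=> a b _ _ /= []].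
split=> [a ha|a b ha hb]; rewrite !imgS_rcons // /opS /swap_at.
  by apply: h1; rewrite swapn_lt // ord_pred_lt.
by move/h2 => e; rewrite -(swapnK g a) -(swapnK g b) e // swapn_lt // ord_pred_lt.
Qed.

Lemma pair_stat_opS_le g v : (pair_stat sinv n (opS g v) <= (pair_stat sinv n v).+1)%N.
Proof. by have := pair_stat_swap_at sinv v (ord_pred_lt g); rewrite /opS /sinv; lia. Qed.

Lemma pair_stat_sinv_eq0 v : perm_vec v -> pair_stat sinv n v = 0%N -> agree n v id_vec.
Proof.
move=> [h1 h2] /pair_stat_eq0 Z; apply: increasing_bounded_id => // a b hab hb.
have := Z a b hab hb; rewrite /sinv.
have : v a <> v b by move=> e; have := h2 a b (ltn_trans hab hb) hb e; lia.
lia.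
Qed.

Lemma pair_stat_sinv_descent v :
  (0 < pair_stat sinv n v)%N -> exists g, (pair_stat sinv n (opS g v)).+1 = pair_stat sinv n v.
Proof.
move=> Hpos; case: (boolP [exists c : 'I_n.-1, (v (val c).+1 < v (val c))%R]).
  move/existsP => [c hlt]; exists c.
  by have := pair_stat_swap_at sinv v (ord_pred_lt c); rewrite /opS /sinv; lia.
rewrite negb_exists => /forallP Hn.
have Hadj c : (c.+1 < n)%N -> (v c <= v c.+1)%R.
  by move=> hc; have := Hn (Ordinal (ltac:(lia) : (c < n.-1)%N)); rewrite /=; lia.
have [a [b [hab hb hp]]] := pair_stat_gt0 Hpos.
by have := homo_le_adjacent Hadj (ltnW hab) hb; rewrite /sinv in hp; lia.
Qed.

Lemma coxlenS w :
  coxlen (fun g : 'I_n.-1 => (val g).+1) actS n w = pair_stat sinv n (imgS w).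
Proof.
apply: (coxlen_stat (admissible := perm_vec) (op := opS)).
- exact: imgS_rcons.
- exact: opS_agree.
- exact: opS_invol.
- exact: pair_stat_agree.
- exact: perm_vec_img.
- exact: pair_stat_opS_le.
- exact: pair_stat_sinv_eq0.
- exact: pair_stat_sinv_descent.
- by apply: pair_stat_id => x y; rewrite /sinv; lia.
Qed.

End TypeS.

Lemma map_toD n w : all (fun g => g < n)%N w -> map (fun g : 'I_n => val g) (toD n w) = w.
Proof.
by elim: w => //= g w IH /andP [hg hw]; rewrite /toD /= insubT /= -/(toD n w) IH.
Qed.

Lemma map_toS n w : all (fun g => 0 < g < n)%N w ->
  map (fun g : 'I_n.-1 => (val g).+1) (toS n w) = w.
Proof.
elim: w => //= g w IH /andP [hg hw]; have hg' : (g.-1 < n.-1)%N by lia.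
by rewrite /toS /= insubT /= -/(toS n w) IH //; congr (_ :: _); lia.
Qed.

Lemma lenD_pair_stat n w : (1 < n)%N -> all (fun g => g < n)%N w ->
  lenD n w = pair_stat dinv n (fun a => evalw actD w (Posz a.+1)).
Proof. by move=> hn hw; rewrite /lenD coxlenD // /images map_toD. Qed.

Lemma lenS_pair_stat n w : all (fun g => 0 < g < n)%N w ->
  lenS n w = pair_stat sinv n (fun a => evalw actS w (Posz a.+1)).
Proof. by move=> hw; rewrite /lenS coxlenS /images map_toS. Qed.

Definition evalN (w : seq nat) (x : nat) : nat := foldr swapn x w.

Lemma evalN_cat w1 w2 x : evalN (w1 ++ w2) x = evalN w1 (evalN w2 x).
Proof. by rewrite /evalN foldr_cat. Qed.

Lemma evalN_revK w x : evalN (rev w) (evalN w x) = x.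
Proof.
by elim: w x => //= g w IH x; rewrite rev_cons -cats1 evalN_cat /= swapnK; exact: IH.
Qed.

Lemma evalN_inj w : injective (evalN w).
Proof. by move=> x y e; rewrite -(evalN_revK w x) e evalN_revK. Qed.

Lemma evalN_gt0 w x : all (fun g => 0 < g)%N w -> (0 < x)%N -> (0 < evalN w x)%N.
Proof.
elim: w => //= g w IH /andP [hg hw] hx; have := IH hw hx; rewrite /swapn.
by case_ifs; lia.
Qed.

Lemma evalN_le n w x : all (fun g => g < n)%N w -> (x <= n)%N -> (evalN w x <= n)%N.
Proof.
elim: w => //= g w IH /andP [hg hw] hx; have := IH hw hx; rewrite /swapn.
by case_ifs; lia.
Qed.

Lemma evalwS_nat w x : evalw actS w (Posz x) = Posz (evalN w x).
Proof. by elim: w => //= g w ->; rewrite actS_pos. Qed.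

Lemma evalwD_nat w x : all (fun g => 0 < g)%N w -> evalw actD w (Posz x) = Posz (evalN w x).
Proof. by elim: w => //= g w IH /andP [hg hw]; rewrite IH // actD_pos. Qed.

Lemma evalN_iota a len x : evalN (iota a len) x =
  if (a <= x < a + len)%N then x.+1 else if x == a + len then a else x.
Proof.
elim: len a => [|len IH] a /=; first by rewrite addn0; case_ifs; lia.
by rewrite IH /swapn; case_ifs; lia.
Qed.

Lemma evalN_t k x : (0 < k)%N -> (0 < x)%N ->
  evalN (t_word k) x = if (x < k)%N then x.+1 else if x == k then 1%N else x.
Proof. by move=> hk hx; rewrite /t_word evalN_iota; case_ifs; lia. Qed.

Lemma tpow_wordS k e : tpow_word k e.+1 = t_word k ++ tpow_word k e.
Proof. by []. Qed.

Lemma evalN_tpow k e x : (0 < x)%N -> (x <= k)%N -> (e <= k)%N ->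
  evalN (tpow_word k e) x = if (x + e <= k)%N then (x + e)%N else (x + e - k)%N.
Proof.
move=> hx hxk; elim: e => [|e IH] he; first by rewrite addn0 hxk.
by rewrite tpow_wordS evalN_cat IH ?(ltnW he) // evalN_t; [case_ifs; lia | lia | case_ifs; lia].
Qed.

Lemma evalN_tpow_gt k e x : (k < x)%N -> evalN (tpow_word k e) x = x.
Proof.
move=> hx; elim: e => [|e IH] //.
by rewrite tpow_wordS evalN_cat IH /t_word evalN_iota; case_ifs; lia.
Qed.

Lemma all_tpow_word (p : pred nat) k e :
  (forall g, (0 < g < k)%N -> p g) -> all p (tpow_word k e).
Proof.
move=> hp; elim: e => //= e IH; rewrite tpow_wordS all_cat IH andbT.
by apply/allP => g; rewrite mem_iota => hg; apply: hp; lia.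
Qed.

Definition ogs_degree (m : nat) (i : nat -> nat) : nat := (\sum_(1 <= j < m.+1) i j)%N.

Definition ogs_shift (m : nat) (k i : nat -> nat) (y : nat) : nat :=
  (\sum_(1 <= j < m.+1) (y <= k j) * i j)%N.

Lemma ogs_word_cons m k i : ogs_word m.+1 k i =
  tpow_word (k 1%N) (i 1%N) ++ ogs_word m (fun j => k j.+1) (fun j => i j.+1).
Proof. by rewrite /ogs_word /= (iotaDl 1 1 m) -map_comp. Qed.

Lemma ogs_degree_cons m i : ogs_degree m.+1 i = (i 1%N + ogs_degree m (fun j => i j.+1))%N.
Proof. by rewrite /ogs_degree big_nat_recl. Qed.

Lemma ogs_shift_cons m k i y : ogs_shift m.+1 k i y =
  ((y <= k 1%N) * i 1%N + ogs_shift m (fun j => k j.+1) (fun j => i j.+1) y)%N.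
Proof. by rewrite /ogs_shift big_nat_recl. Qed.

Lemma all_ogs_word (p : pred nat) m k i :
  (forall j g, (0 < j <= m)%N -> (0 < g < k j)%N -> p g) -> all p (ogs_word m k i).
Proof.
elim: m k i => [|m IH] k i hp //; rewrite ogs_word_cons all_cat.
rewrite all_tpow_word => [|g hg]; last exact: (hp 1%N).
by apply: IH => j g hj; apply: (hp j.+1); lia.
Qed.

Lemma ogs_word_gt0 m k i : all (fun g => 0 < g)%N (ogs_word m k i).
Proof. by apply: all_ogs_word => j g _ /andP []. Qed.

Lemma evalN_ogs_gt0 m k i x : (0 < x)%N -> (0 < evalN (ogs_word m k i) x)%N.
Proof. by move=> hx; rewrite evalN_gt0 ?ogs_word_gt0. Qed.

Lemma increasing_homo_le m k : (forall j, (0 < j < m)%N -> (k j < k j.+1)%N) ->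
  forall x y, (0 < x)%N -> (x <= y)%N -> (y <= m)%N -> (k x <= k y)%N.
Proof.
move=> H x y hx hxy hy.
apply: (@homo_leq_in _ [pred j | 0 < j <= m]%N k leq); rewrite ?inE //=.
- exact: leq_trans.
- by move=> a b ha hb c hc; rewrite !inE in ha hb *; lia.
- by move=> j hj hj1; rewrite !inE in hj hj1; apply/ltnW/H; lia.
- by rewrite hx (leq_trans hxy).
- by rewrite hy (leq_trans hx).
Qed.

Lemma ogs_shift_all m k i y :
  (forall x, (0 < x <= m)%N -> (y <= k x)%N) -> ogs_shift m k i y = ogs_degree m i.
Proof.
move=> H; rewrite /ogs_shift /ogs_degree big_nat_cond [RHS]big_nat_cond.
by apply: eq_bigr => x /andP [hx _]; rewrite H ?mul1n //; lia.
Qed.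

Lemma ogs_shift_le m k i y : (ogs_shift m k i y <= ogs_degree m i)%N.
Proof. by apply: leq_sum => x _; case: (y <= k x)%N; rewrite ?mul1n ?mul0n. Qed.

Lemma ogs_shift_anti m k i y y' : (y <= y')%N -> (ogs_shift m k i y' <= ogs_shift m k i y)%N.
Proof.
move=> h; apply: leq_sum => x _; case: (leqP y' (k x)) => h1.
  by rewrite (leq_trans h h1).
by rewrite mul0n.
Qed.

Definition ogs_shape (P T : nat -> nat) (M K : nat) : Prop :=
  [/\ forall y, (M < y)%N -> P (y - T y)%N = y,
      forall a a', (0 < a)%N -> (0 < a')%N -> (P a < P a')%N -> (P a' <= M)%N -> (a < a')%N
    & forall a, (0 < a)%N -> (0 < P a)%N -> (P a <= M)%N -> (K - M < a)%N].

Lemma ogs_shape_ext P P' T T' M K :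
  P =1 P' -> T =1 T' -> ogs_shape P T M K -> ogs_shape P' T' M K.
Proof.
move=> eP eT [h1 h2 h3]; split=> [y|a a'|a]; rewrite -?eP -?eT; [exact: h1 | exact: h2 |].
exact: h3.
Qed.

Section OgsShapeStep.
Variables (K e Mr K' : nat) (r Tr : nat -> nat).
Hypothesis eMr_le : (e + Mr <= K)%N.
Hypothesis K_lt : (0 < Mr)%N -> (K < K')%N.
Hypothesis r_shape : ogs_shape r Tr Mr K'.
Hypothesis Tr_low : forall y, (y <= K)%N -> Tr y = Mr.
Hypothesis Tr_le : forall y, (Tr y <= Mr)%N.
Hypothesis r_gt0 : forall x, (0 < x)%N -> (0 < r x)%N.
Hypothesis r_inj : injective r.

Local Notation t := (evalN (tpow_word K e)).

Lemma tpow_low x : (0 < x)%N -> (x + e <= K)%N -> t x = (x + e)%N.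
Proof. by move=> hx hxe; rewrite evalN_tpow ?hxe //; lia. Qed.

Lemma tpow_wrap x : (K < x + e)%N -> (x <= K)%N -> t x = (x + e - K)%N.
Proof. by move=> hxe hx; rewrite evalN_tpow; [rewrite leqNgt hxe | lia ..]. Qed.

Lemma tail_mid_pos a : (0 < a)%N -> (Mr < r a)%N -> (r a <= K)%N -> a = (r a - Mr)%N.
Proof.
have [h1 _ _] := r_shape; move=> ha h2 h3.
by apply: r_inj; have := h1 (r a) h2; rewrite Tr_low.
Qed.

Lemma tail_le_K a : (t (r a) <= e + Mr)%N -> (r a <= K)%N.
Proof. by case: (leqP (r a) K) => // h; rewrite evalN_tpow_gt //; lia. Qed.

Lemma ogs_shape_step_high y : (e + Mr < y)%N ->
  t (r (y - ((y <= K) * e + Tr y))) = y.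
Proof.
have [h1 _ _] := r_shape; move=> hy; case: (leqP y K) => hyK.
  rewrite mul1n Tr_low //.
  have := h1 (y - e)%N ltac:(lia); rewrite Tr_low; last lia.
  by rewrite subnDA => ->; rewrite tpow_low; lia.
by rewrite mul0n add0n h1 ?evalN_tpow_gt //; have := Tr_le y; lia.
Qed.

Lemma ogs_shape_step_mono a a' : (0 < a)%N -> (0 < a')%N ->
  (t (r a) < t (r a'))%N -> (t (r a') <= e + Mr)%N -> (a < a')%N.
Proof.
have [_ h2 h3] := r_shape; move=> ha ha' hlt hle.
have hK := tail_le_K (ltnW (leq_trans hlt hle)); have hK' := tail_le_K hle.
have xp := r_gt0 ha; have xp' := r_gt0 ha'.
move: hlt hle; case: (leqP (r a + e) K) => c1; case: (leqP (r a' + e) K) => c2.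
- by rewrite !tpow_low // => hlt hle; apply: h2 => //; lia.
- by rewrite tpow_low // tpow_wrap //; lia.
- rewrite tpow_wrap // tpow_low // => _ hle.
  have := h3 a' ha' xp' ltac:(lia); have := K_lt ltac:(lia).
  by have := tail_mid_pos ha ltac:(lia) hK; lia.
- rewrite !tpow_wrap // => hlt _.
  by have := tail_mid_pos ha ltac:(lia) hK; have := tail_mid_pos ha' ltac:(lia) hK'; lia.
Qed.

Lemma ogs_shape_step_low a : (0 < a)%N -> (t (r a) <= e + Mr)%N -> (K - (e + Mr) < a)%N.
Proof.
have [_ _ h3] := r_shape; move=> ha hle.
have hK := tail_le_K hle; have xp := r_gt0 ha.
move: hle; case: (leqP (r a + e) K) => c1.
  rewrite tpow_low // => hle.
  by have := h3 a ha xp ltac:(lia); have := K_lt ltac:(lia); lia.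
by rewrite tpow_wrap // => _; have := tail_mid_pos ha ltac:(lia) hK; lia.
Qed.

Lemma ogs_shape_step :
  ogs_shape (fun x => t (r x)) (fun y => (y <= K) * e + Tr y)%N (e + Mr) K.
Proof.
split=> [|a a' ha ha' hlt|a ha _]; [exact: ogs_shape_step_high | | exact: ogs_shape_step_low].
exact: ogs_shape_step_mono.
Qed.

End OgsShapeStep.

Lemma ogs_word_shape m k i :
  (forall j, (0 < j < m)%N -> (k j < k j.+1)%N) -> (ogs_degree m i <= k 1%N)%N ->
  ogs_shape (evalN (ogs_word m k i)) (ogs_shift m k i) (ogs_degree m i) (k 1%N).
Proof.
elim: m k i => [|m IH] k i Hk HM.
  by rewrite /ogs_degree big_geq //; split=> * /=; rewrite /ogs_shift ?big_geq //=; lia.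
rewrite ogs_degree_cons in HM *; set k' := fun j => k j.+1; set i' := fun j => i j.+1 in HM *.
have kmono := increasing_homo_le Hk.
have Hk' j : (0 < j < m)%N -> (k' j < k' j.+1)%N by move=> hj; apply: Hk; lia.
have degm_pos : (0 < ogs_degree m i')%N -> (k 1%N < k' 1%N)%N.
  move=> hpos; apply: Hk; case: (posnP m) => hm; last lia.
  by move: hpos; rewrite hm /ogs_degree big_geq.
apply: ogs_shape_ext (ogs_shape_step (r := evalN (ogs_word m k' i'))
  (Tr := ogs_shift m k' i') HM degm_pos _ _ _ _ _) => //.
- by move=> x; rewrite ogs_word_cons evalN_cat.
- by move=> y; rewrite ogs_shift_cons.
- apply: IH => //; case: (posnP (ogs_degree m i')) => [->|/degm_pos]; lia.
- move=> y hy; apply: ogs_shift_all => x hx.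
  by have := kmono 1%N x.+1 isT ltac:(lia) ltac:(lia); rewrite /k'; lia.
- exact: ogs_shift_le.
- exact: evalN_ogs_gt0.
- exact: evalN_inj.
Qed.

Definition signed (b : bool) (x : int) : int := if b then (- x)%R else x.

Lemma signedA b c x : signed b (signed c x) = signed (b (+) c) x.
Proof. by case: b; case: c; rewrite /signed ?opprK. Qed.

Lemma evalwD_signed w b x : evalw actD w (signed b x) = signed b (evalw actD w x).
Proof. by case: b; rewrite /signed ?evalwD_opp. Qed.

Lemma wL_wordS L : (0 < L)%N -> wL_word L.+1 = L.+1 :: wL_word L ++ [:: L.+1].
Proof.
move=> hL; rewrite /wL_word.
have -> : iota 1 L.+1 = rcons (iota 1 L) L.+1 by rewrite -cats1 -(addn1 L) iotaD /= addnC.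
rewrite rev_rcons /=.
have -> : iota 2 L = iota 2 L.-1 ++ [:: L.+1].
  by rewrite -{1}(prednK hL) -(addn1 L.-1) iotaD; congr (_ ++ [:: _]); lia.
by rewrite -catA.
Qed.

Lemma evalw_wL L y : (0 < L)%N -> (0 < y)%N ->
  evalw actD (wL_word L) (Posz y) = signed ((y == 1%N) || (y == L.+1)) y.
Proof.
elim: L y => [//|L IH] y _ hy; case: (posnP L) => [->|hL].
  by rewrite /wL_word /= /signed /actD /swap_signed /=; case_ifs; lia.
rewrite wL_wordS // /= evalw_cat /= actD_pos // IH //; last by rewrite /swapn; case_ifs; lia.
have -> : ((swapn L.+1 y == 1%N) || (swapn L.+1 y == L.+1)) = ((y == 1%N) || (y == L.+2)).
  by rewrite /swapn; case_ifs; lia.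
by case: (_ || _); rewrite /signed ?actD_opp actD_pos // swapnK.
Qed.

Lemma all_wL_words n s : {in s, forall L, L < n}%N ->
  all (fun g => g < n)%N (flatten (map wL_word s)).
Proof.
move=> s_lt; apply/allP => g /flattenP [w /mapP [L /s_lt hL ->]].
by rewrite /wL_word mem_cat mem_rev in_cons !mem_iota; lia.
Qed.

Definition wL_sign (s : seq nat) (y : nat) : bool :=
  if y == 1%N then odd (size s) else y.-1 \in s.

Lemma evalw_wL_words s y : all (fun L => 0 < L)%N s -> uniq s -> (0 < y)%N ->
  evalw actD (flatten (map wL_word s)) (Posz y) = signed (wL_sign s y) y.
Proof.
move=> + + hy; elim: s => [|L s IH] /= => [_ _|/andP [hL hs] /andP [nLs us]].
  by rewrite /wL_sign; case: ifP.
rewrite evalw_cat IH // evalwD_signed evalw_wL // signedA /wL_sign /= in_cons.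
congr signed; case: eqP => [->|ny1] /=; first by rewrite addbT.
case: (eqVneq y L.+1) => [->|nyL] /=; first by rewrite eqxx (negbTE nLs).
by rewrite addbF (_ : (y.-1 == L) = false) //; apply/eqP => e; rewrite -e prednK ?eqxx in nyL; lia.
Qed.

Lemma dinv_signed bx by_ (x y : nat) : x <> y -> (0 < x)%N -> (0 < y)%N ->
  dinv (signed bx x) (signed by_ y) = (sinv x y + 2 * (by_ && (x < y)%N))%N.
Proof. by move=> nxy hx hy; rewrite /dinv /sinv /signed; case: bx; case: by_ => /=; lia. Qed.

Definition lower_before (n : nat) (P : nat -> nat) (b : nat) : nat :=
  \sum_(a < n) ((a < b)%N * (P a.+1 < P b.+1)%N).

Lemma pair_stat_signed n (P : nat -> nat) (s : nat -> bool) :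
  (forall a, (0 < P a.+1)%N) ->
  (forall a b, (a < n)%N -> (b < n)%N -> P a.+1 = P b.+1 -> a = b) ->
  pair_stat dinv n (fun a => signed (s (P a.+1)) (P a.+1)) =
  (pair_stat sinv n (fun a => Posz (P a.+1)) +
   2 * \sum_(b < n) s (P b.+1) * lower_before n P b)%N.
Proof.
move=> P_gt0 P_inj.
have -> : (\sum_(b < n) s (P b.+1) * lower_before n P b =
    \sum_(a < n) \sum_(b < n) (a < b)%N * (s (P b.+1) && (P a.+1 < P b.+1)%N))%N.
  rewrite exchange_big; apply: eq_bigr => b _; rewrite big_distrr; apply: eq_bigr => a _ /=.
  by case: (s _); case: (P a.+1 < _)%N; rewrite ?muln0 ?muln1 ?mul1n ?mul0n.
rewrite /pair_stat big_distrr -big_split; apply: eq_bigr => a _.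
rewrite big_distrr -big_split; apply: eq_bigr => b _ /=.
case: (ltnP a b) => hab; last by rewrite !mul0n.
rewrite !mul1n dinv_signed // => /(P_inj _ _ (ltn_trans hab (ltn_ord b)) (ltn_ord b)) eab.
by rewrite eab ltnn in hab.
Qed.

Lemma sum_ltn n c : (c <= n)%N -> (\sum_(a < n) (a < c)%N = c)%N.
Proof.
elim: n c => [|n IH] c hc; first by rewrite big_ord0; lia.
rewrite big_ord_recr /=; case: (leqP c n) => h; first by rewrite IH // addn0.
have -> : c = n.+1 by lia.
rewrite (eq_bigr (fun a : 'I_n => 1%N)) ?sum1_card ?card_ord ?ltnSn ?addn1 //.
by move=> a _ /=; rewrite ltnS ltnW.
Qed.

Lemma sum_lt_value n (P : nat -> nat) y :
  (forall x, (0 < x <= n)%N -> (0 < P x <= n)%N) ->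
  (forall x x', (0 < x <= n)%N -> (0 < x' <= n)%N -> P x = P x' -> x = x') ->
  (0 < y <= n.+1)%N ->
  (\sum_(a < n) (P a.+1 < y)%N = y.-1)%N.
Proof.
move=> P_range P_inj hy.
have P_lt (a : 'I_n) : ((P a.+1).-1 < n)%N by have := P_range a.+1 (ltn_ord a); lia.
set h := fun a : 'I_n => Ordinal (P_lt a).
have h_inj : injective h.
  move=> a b /(congr1 val) /= e; apply: val_inj; apply/succn_inj/P_inj.
  1, 2: exact: ltn_ord.
  by rewrite /=; have := P_range a.+1 (ltn_ord a); have := P_range b.+1 (ltn_ord b); lia.
rewrite -[RHS](sum_ltn (n := n)); last lia.
rewrite [RHS](reindex_inj h_inj); apply: eq_bigr => a _ /=.
by have := P_range a.+1 (ltn_ord a); lia.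
Qed.

Lemma map_iota_uniq (L : nat -> nat) u :
  (forall j j', (1 <= j <= u)%N -> (1 <= j' <= u)%N -> j <> j' -> L j <> L j') ->
  uniq [seq L j | j <- iota 1 u].
Proof.
move=> L_inj; rewrite map_inj_in_uniq ?iota_uniq // => j j'; rewrite !mem_iota => hj hj' e.
by case: (eqVneq j j') => // nj; exfalso; apply: (L_inj j j') e; [lia | lia | apply/eqP].
Qed.

Lemma sum_eq_succ_mem (L : nat -> nat) u y : uniq [seq L j | j <- iota 1 u] -> (0 < y)%N ->
  (\sum_(1 <= j < u.+1) (y == (L j).+1) = (y.-1 \in [seq L j | j <- iota 1 u]))%N.
Proof.
move=> us hy; rewrite -count_uniq_mem // count_map /index_iota subSS subn0.
elim: (iota 1 u) => [|j s IH]; first by rewrite big_nil.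
rewrite big_cons IH /=; congr (_ + _)%N.
by case: (eqVneq y (L j).+1) => [->|ne] /=; [rewrite eqxx | case: eqP => //; lia].
Qed.

Lemma sum_eq_at n (Q : nat -> nat) y (f : nat -> nat) b0 :
  (b0 < n)%N -> Q b0 = y -> (forall b, (b < n)%N -> Q b = y -> b = b0) ->
  (\sum_(b < n) (Q b == y) * f b = f b0)%N.
Proof.
move=> hb0 hq Hu; rewrite (bigD1 (Ordinal hb0)) //= hq eqxx mul1n big1 ?addn0 // => b nb.
case: (eqVneq (Q b) y) => [e|ne]; last by rewrite mul0n.
by have := Hu b (ltn_ord b) e => eb; rewrite -val_eqE /= eb eqxx in nb.
Qed.

Lemma sum_wL_sign_lower n (P L : nat -> nat) u : uniq [seq L j | j <- iota 1 u] ->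
  (forall a, (0 < P a.+1)%N) ->
  (\sum_(b < n) wL_sign [seq L j | j <- iota 1 u] (P b.+1) * lower_before n P b =
   \sum_(1 <= j < u.+1) \sum_(b < n) (P b.+1 == (L j).+1) * lower_before n P b)%N.
Proof.
move=> us P_gt0; rewrite [RHS]exchange_big /=; apply: eq_bigr => b _.
rewrite -big_distrl /= sum_eq_succ_mem //; case: (eqVneq (P b.+1) 1%N) => [e|ne].
  rewrite /lower_before big1 ?muln0 // => a _; rewrite e.
  by have := P_gt0 a; case: (P a.+1) => // ? _; rewrite muln0.
by rewrite /wL_sign (negbTE ne).
Qed.

Lemma ogs_shift_above m k i y :
  (forall x, (0 < x <= m)%N -> (k x < y)%N) -> ogs_shift m k i y = 0%N.
Proof.
move=> H; rewrite /ogs_shift big_nat_cond big1 // => x /andP [hx _].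
by rewrite leqNgt H.
Qed.

Lemma ogs_shift_between m k i y q : (forall j, (0 < j < m)%N -> (k j < k j.+1)%N) ->
  (2 <= q <= m)%N -> (k q.-1 < y)%N -> (y <= k q)%N ->
  ogs_shift m k i y = (\sum_(q <= x < m.+1) i x)%N.
Proof.
move=> Hk hq h1 h2; have kmono := increasing_homo_le Hk.
rewrite /ogs_shift (big_cat_nat (n := q)) /=; [|lia|lia].
rewrite big_nat_cond big1 ?add0n; last first.
  move=> x /andP [/andP [hx1 hx2] _]; have := kmono x q.-1 ltac:(lia) ltac:(lia) ltac:(lia).
  by case: leqP => //; lia.
apply: eq_big_nat => x hx; have := kmono q x ltac:(lia) ltac:(lia) ltac:(lia).
by case: leqP => //; lia.
Qed.

Lemma increasing_interval m k y : (forall j, (0 < j < m)%N -> (k j < k j.+1)%N) -> (0 < m)%N ->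
  (k 1%N <= y)%N -> (y < k m)%N ->
  exists q, [/\ (2 <= q <= m)%N, (k q.-1 <= y)%N & (y < k q)%N].
Proof.
move=> Hk hm h1 h2.
have ex : exists q, (0 < q)%N && (y < k q)%N by exists m; rewrite hm h2.
case: (ex_minnP ex) => q /andP [hq0 hq] Hmin.
have hqm : (q <= m)%N by apply: Hmin; rewrite hm h2.
have hq1 : q != 1%N by apply/eqP => e; rewrite e in hq; lia.
exists q; split => //; first lia.
case: (leqP (k q.-1) y) => // hlt.
by have := Hmin q.-1; rewrite hlt andbT (_ : 0 < q.-1)%N; [move=> /(_ isT); lia | lia].
Qed.

Section OgsCount.
Variables (n m : nat) (k i : nat -> nat).
Hypothesis m_gt0 : (0 < m)%N.
Hypothesis k_incr : forall j, (0 < j < m)%N -> (k j < k j.+1)%N.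
Hypothesis km_le : (k m <= n)%N.
Hypothesis deg_le : (ogs_degree m i <= k 1%N)%N.

Local Notation O := (ogs_word m k i).
Local Notation P := (evalN O).
Local Notation M := (ogs_degree m i).
Local Notation T := (ogs_shift m k i).

Lemma ogs_word_letters : all (fun g => 0 < g < n)%N O.
Proof.
apply: all_ogs_word => j g hj hg.
by have := increasing_homo_le k_incr (x := j) (y := m) ltac:(lia) ltac:(lia) (leqnn m); lia.
Qed.

Lemma ogs_word_lt : all (fun g => g < n)%N O.
Proof. by apply/allP => g /(allP ogs_word_letters) /andP []. Qed.

Lemma ogs_range x : (0 < x <= n)%N -> (0 < P x <= n)%N.
Proof.
by case/andP => hx0 hxn; rewrite evalN_gt0 ?evalN_le // ?ogs_word_gt0 ?ogs_word_lt.
Qed.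

Lemma ogs_preimage y : (0 < y <= n)%N -> exists2 b, (b < n)%N & P b.+1 = y.
Proof.
move=> hy; exists (evalN (rev O) y).-1.
  by have := @evalN_le n (rev O) y; rewrite all_rev ogs_word_lt; lia.
have := @evalN_gt0 (rev O) y; rewrite all_rev ogs_word_gt0 => /(_ isT) h.
rewrite prednK ?h //; last lia.
by have := evalN_revK (rev O) y; rewrite revK.
Qed.

Lemma lower_before_small b : (b < n)%N -> (P b.+1 <= M)%N -> lower_before n P b = (P b.+1).-1.
Proof.
have [_ mono _] := ogs_word_shape k_incr deg_le; move=> hb hy.
have hy0 := ogs_range (x := b.+1) ltac:(lia).
rewrite -(sum_lt_value (y := P b.+1) ogs_range); last lia; last first.
  by move=> x x' _ _; apply: (@evalN_inj O).
apply: eq_bigr => a _; case: (ltnP (P a.+1) (P b.+1)) => h; last by rewrite muln0.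
by rewrite muln1 -ltnS (mono a.+1 b.+1).
Qed.

Lemma lower_before_large b : (b < n)%N -> (M < P b.+1)%N ->
  lower_before n P b = ((P b.+1).-1 - T (P b.+1))%N.
Proof.
have [at_shift _ _] := ogs_word_shape k_incr deg_le; move=> hb hy.
set y := P b.+1 in hy *.
have hby : b.+1 = (y - T y)%N by apply: (@evalN_inj O); rewrite at_shift.
have hTM := ogs_shift_le m k i y.
rewrite /lower_before -/y (_ : (y.-1 - T y)%N = b); last lia.
rewrite -[RHS](sum_ltn (n := n)); last lia.
apply: eq_bigr => a _; case: (ltnP a b) => hab; last by rewrite mul0n.
rewrite mul1n; case: (ltnP (P a.+1) y) => // hge; exfalso.
have hne : P a.+1 <> y by move/(@evalN_inj O); lia.
have := at_shift (P a.+1) ltac:(lia) => /(@evalN_inj O) ea.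
have := ogs_shift_anti m k i (ltnW (ltac:(lia) : (y < P a.+1)%N)); lia.
Qed.

Lemma rho_eq_lower L0 r : (1 <= L0)%N ->
  ((L0 < M)%N \/ (k m <= L0)%N -> r = L0) ->
  ((M <= L0 < k 1%N)%N -> r = (L0 - M)%N) ->
  (forall q, (2 <= q <= m)%N -> (k q.-1 <= L0 < k q)%N -> r = (L0 - \sum_(q <= x < m.+1) i x)%N) ->
  r = if (L0 < M)%N then L0 else (L0 - T L0.+1)%N.
Proof.
have kmono := increasing_homo_le k_incr.
move=> hL R1 R2 R3; case: ltnP => hM; first by apply: R1; left.
case: (leqP (k m) L0) => hkm.
  rewrite ogs_shift_above ?subn0; first by apply: R1; right.
  by move=> x hx; have := kmono x m ltac:(lia) ltac:(lia) (leqnn m); lia.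
case: (ltnP L0 (k 1%N)) => hk1.
  rewrite ogs_shift_all; first by apply: R2; lia.
  by move=> x hx; have := kmono 1%N x isT ltac:(lia) ltac:(lia); lia.
have [q [hq hq1 hq2]] := increasing_interval k_incr m_gt0 hk1 hkm.
by rewrite (ogs_shift_between i k_incr hq) //; [apply: R3 | ..]; lia.
Qed.

Lemma sum_at_value_lower L0 r : (1 <= L0 <= n.-1)%N ->
  ((L0 < M)%N \/ (k m <= L0)%N -> r = L0) ->
  ((M <= L0 < k 1%N)%N -> r = (L0 - M)%N) ->
  (forall q, (2 <= q <= m)%N -> (k q.-1 <= L0 < k q)%N -> r = (L0 - \sum_(q <= x < m.+1) i x)%N) ->
  (\sum_(b < n) (P b.+1 == L0.+1) * lower_before n P b = r)%N.
Proof.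
move=> hL R1 R2 R3; have [b hb Pb] := ogs_preimage (y := L0.+1) ltac:(lia).
rewrite (sum_eq_at (Q := fun b => P b.+1) _ hb Pb); last first.
  by move=> b' _ e; apply/succn_inj/(evalN_inj (w := O)); rewrite e.
rewrite (rho_eq_lower _ R1 R2 R3); last lia.
case: (leqP (P b.+1) M) => hy.
  by rewrite lower_before_small // Pb ifT //; rewrite Pb in hy.
by rewrite lower_before_large // Pb ifN //; rewrite Pb in hy; lia.
Qed.

End OgsCount.

Unset Implicit Arguments.
Theorem mainTheorem15 (n m u : nat) (k i L rho : nat -> nat) :
  (1 <= m)%N ->
  (2 <= k 1)%N ->
  (forall j, (1 <= j < m)%N -> (k j < k j.+1)%N) ->
  (k m <= n)%N ->
  (forall j, (1 <= j <= m)%N -> (1 <= i j <= (k j).-1)%N) ->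
  let M := (\sum_(1 <= j < m.+1) i j)%N in
  (M <= k 1)%N ->
  (forall j, (1 <= j <= u)%N -> (1 <= L j <= n.-1)%N) ->
  (forall j j', (1 <= j <= u)%N -> (1 <= j' <= u)%N -> j <> j' -> L j <> L j') ->
  (forall j, (1 <= j <= u)%N ->
     (((L j < M)%N \/ (k m <= L j)%N) -> rho j = L j) /\
     ((M <= L j < k 1)%N -> rho j = (L j - M)%N) /\
     (forall q, (2 <= q <= m)%N -> (k q.-1 <= L j < k q)%N ->
        rho j = (L j - \sum_(q <= x < m.+1) i x)%N)) ->
  lenD n (flatten [seq wL_word (L j) | j <- iota 1 u] ++ ogs_word m k i)
  = (lenS n (ogs_word m k i) + 2 * \sum_(1 <= j < u.+1) rho j)%N.
Proof.
move=> m_gt0 k1_ge2 k_incr km_le _ M deg_le L_range L_inj rho_spec.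
set O := ogs_word m k i; set P := evalN O; set Ls := [seq L j | j <- iota 1 u].
have n_gt1 : (1 < n)%N.
  by have := increasing_homo_le k_incr (x := 1) (y := m) isT m_gt0 (leqnn m); lia.
have Ls_range L0 : L0 \in Ls -> (0 < L0 < n)%N.
  by case/mapP => j; rewrite mem_iota => hj ->; have := L_range j; lia.
have Ls_gt0 : all (fun L0 => 0 < L0)%N Ls by apply/allP => L0 /Ls_range /andP [].
have Ls_uniq : uniq Ls := map_iota_uniq L_inj.
have -> : [seq wL_word (L j) | j <- iota 1 u] = map wL_word Ls by rewrite /Ls -map_comp.
rewrite lenD_pair_stat ?lenS_pair_stat ?ogs_word_letters ?all_cat ?(@ogs_word_lt n) ?andbT //;
  last by apply: all_wL_words => L0 /Ls_range /andP [].
rewrite (@pair_stat_agree _ _ _ (fun a => signed (wL_sign Ls (P a.+1)) (P a.+1))) => [|a _];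
  last by rewrite evalw_cat evalwD_nat ?ogs_word_gt0 // evalw_wL_words ?evalN_ogs_gt0.
rewrite (@pair_stat_agree _ _ (fun a => evalw actS O a.+1) (fun a => Posz (P a.+1))) => [|a _];
  last by rewrite evalwS_nat.
rewrite pair_stat_signed => [|a|a b _ _ /(@evalN_inj O) []//]; last exact: evalN_ogs_gt0.
rewrite sum_wL_sign_lower // => [|a]; last exact: evalN_ogs_gt0.
congr (_ + 2 * _)%N; apply: eq_big_nat => j hj; have [R1 [R2 R3]] := rho_spec j hj.
by apply: (sum_at_value_lower m_gt0 k_incr km_le deg_le (L_range j _) R1 R2 R3); lia.
Qed.
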